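(* In equilibrium of the execution auction game, Builder 1 proposes the block with higher probability than if the right to propose had been sold in Period 2 (e.g., via MEV-Boost).
   Context: Execution auction game: players are 2 builders and any number of non-builders. In Period 1 the right to propose a future block is sold in an English (equivalently second-price) auction. In Period 2, each builder i privately learns its value v_i, drawn independently from CDF F_i with continuous density f_i on [0,1], with non-decreasing hazard rates, and F_1 dominating F_2 in the hazard rate order; non-builders value proposing at 0. Only distributions are known (commonly) in Period 1. The Period 1 winner, after learning its own value, either proposes itself or resells via the Myerson optimal auction; for a builder owner with value v_1 this is a take-it-or-leave-it offer to builder 2 at price v_2^*(v_1) > v_1 solving v_2^* - (1-F_2(v_2^* ))/f_2(v_2^* ) = v_1, and builder 2 buys only if v_2 ≥ v_2^*(v_1). Equilibrium is subgame perfect with truthful bidding in the Period 1 auction; in this equilibrium Builder 1 always wins the Period 1 auction. Benchmark: selling the right in Period 2 via MEV-Boost, an English auction in which builders bid truthfully, so builder 2 wins whenever v_2 ≥ v_1. *)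

From HB Require Import structures.
From mathcomp Require Import all_boot all_order all_algebra.
From mathcomp Require Import all_classical all_reals all_analysis.
Set Implicit Arguments. Unset Strict Implicit. Unset Printing Implicit Defensive.
Import Order.TTheory GRing.Theory Num.Theory.
Import numFieldNormedType.Exports.
Local Open Scope classical_set_scope.
Local Open Scope ring_scope.

Section defs.
Variable R : realType.
Notation mu := (@lebesgue_measure R).

Definition is_cdf_with_density (F f : R -> R) : Prop :=
  [/\ {within `[0%R, 1%R], continuous f},
      (forall x, 0 <= x <= 1 -> 0 <= f x),
      (forall x : R, 0 <= x <= 1 ->
          (\int[mu]_(t in `[0%R, x]) (f t)%:E)%E = (F x)%:E),
      (forall x, x < 0 -> F x = 0) &
      (forall x, 1 <= x -> F x = 1)].

Definition hazard (F f : R -> R) (x : R) : R := f x / (1 - F x).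

Definition nondecreasing_hazard (F f : R -> R) : Prop :=
  forall x y, 0 <= x -> x <= y -> y < 1 -> hazard F f x <= hazard F f y.

Definition hazard_rate_dominates (F1 f1 F2 f2 : R -> R) : Prop :=
  forall x, 0 <= x < 1 -> hazard F1 f1 x <= hazard F2 f2 x.

Definition virtual_value (F f : R -> R) (v : R) : R := v - (1 - F v) / f v.

(* v2star is the Myerson (optimal take-it-or-leave-it) resale price
   of an owner with value v1: v2star v1 > v1 solves the virtual-value equation. *)
Definition myerson_price (F2 f2 v2star : R -> R) : Prop :=
  forall v1, 0 <= v1 < 1 ->
    [/\ v1 < v2star v1, v2star v1 <= 1, 0 < f2 (v2star v1) &
        virtual_value F2 f2 (v2star v1) = v1].

(* Joint law of the independent values (v1, v2), with density f1(v1) f2(v2). *)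
Definition prob2 (f1 f2 : R -> R) (E : set (R * R)) : \bar R :=
  (\int[(mu \x mu)%E]_(z in E `&` (`[0%R, 1%R] `*` `[0%R, 1%R]))
      (f1 z.1 * f2 z.2)%:E)%E.

(* Equilibrium of the execution auction: Builder 1 wins Period 1, learns v1,
   offers the right to builder 2 at price v2star v1; builder 2 buys iff
   v2 >= v2star v1. *)
Definition B1_proposes_auction (v2star : R -> R) : set (R * R) :=
  [set z | z.2 < v2star z.1].

(* MEV-Boost benchmark (English auction in Period 2): builder 2 wins iff
   v2 >= v1, so Builder 1 proposes iff v2 < v1. *)
Definition B1_proposes_mevboost : set (R * R) := [set z | z.2 < z.1].

End defs.

From HB Require Import structures.
From mathcomp Require Import all_boot all_order all_algebra.
From mathcomp Require Import all_classical all_reals all_analysis.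
From mathcomp Require Import lra measurable_realfun.
Set Implicit Arguments. Unset Strict Implicit. Unset Printing Implicit Defensive.
Import Order.TTheory GRing.Theory Num.Theory.
Import numFieldNormedType.Exports.
Local Open Scope classical_set_scope.
Local Open Scope ring_scope.

(* For v1 < 1 the resale price v2star v1 exceeds v1, so apart from the null
   line v1 = 1 (where the Myerson condition says nothing) the MEV-Boost event
   {v2 < v1} lies inside the auction event {v2 < v2star v1}.  The difference
   contains a rectangle [a, b] x [c, d] with b < c and d < v2star a on which
   both densities are positive: [a, b] is taken where f1 > 0, and [c, d] just
   below v2star a, where f2 > 0 because f2 (v2star a) > 0.  An increasing
   hazard rate makes the virtual value, hence v2star, nondecreasing, so
   v2 <= d < v2star a <= v2star v1 on the whole rectangle.  The rectangle has
   positive probability, which gives the strict inequality. *)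

Lemma continuous_within_gt0_near (R : realType) (f : R -> R) (A : set R) x :
  {within A, continuous f} -> A x -> 0 < f x ->
  exists2 e : R, 0 < e & forall y, A y -> `|x - y| < e -> 0 < f y.
Proof.
move=> cf Ax fx0.
have fx : f t @[t --> within A (nbhs x)] --> f x by rewrite (nbhs_subspace_in Ax); exact: cf.
move: fx0 => /(cvgr_gt _ fx).
rewrite /prop_near1 /within /= => /nbhs_ballP[e e0 near_x].
by exists e => // y Ay xy; exact: near_x.
Qed.

Lemma continuous_gt0_subitv (R : realType) (f : R -> R) (u v x : R) :
  u < v -> {within `[u, v], continuous f} -> u <= x <= v -> 0 < f x ->
  exists a b, [/\ u < a, a < b, b < v & forall y, a <= y <= b -> 0 < f y].
Proof.
move=> uv cf /andP[ux xv] fx0.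
have xuv : [set` `[u, v]] x by rewrite /= in_itv /= ux xv.
have [e e0 near_x] := continuous_within_gt0_near cf xuv fx0.
pose a0 := Num.max u (x - e); pose b0 := Num.min v (x + e).
have ua0 : u <= a0 by rewrite le_max lexx.
have a0x : x - e <= a0 by rewrite le_max lexx orbT.
have b0v : b0 <= v by rewrite ge_min lexx.
have b0x : b0 <= x + e by rewrite ge_min lexx orbT.
have a0b0 : a0 < b0 by rewrite lt_min !gt_max uv /=; apply/and3P; split; lra.
exists (a0 + (b0 - a0) / 3), (b0 - (b0 - a0) / 3); split; try lra.
move=> y ay_b; apply: near_x; first by rewrite /= in_itv /=; apply/andP; split; lra.
rewrite ltr_norml; apply/andP; split; lra.
Qed.

Lemma ge0_le_subset_integral d (T : measurableType d) (R : realType)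
    (mu : {measure set T -> \bar R}) (A B : set T) (f g : T -> \bar R) :
  A `<=` B -> (forall x, A x -> (0 <= f x <= g x)%E) ->
  (forall x, B x -> (0 <= g x)%E) ->
  (\int[mu]_(x in A) f x <= \int[mu]_(x in B) g x)%E.
Proof.
move=> AB fg g0.
rewrite ge0_integralE; last by move=> x /fg /andP[].
rewrite ge0_integralE //; apply: ereal_sup_le => _ [h hf <-].
exists h => //= x; apply: le_trans (hf x) _; rewrite /patch.
case: ifPn => [/[!inE] Ax|_].
  by rewrite (mem_set (AB _ Ax)); case/andP: (fg x Ax).
by case: ifPn => // /[!inE] /g0.
Qed.

Lemma cdf_density_gt0 (R : realType) (F f : R -> R) :
  is_cdf_with_density F f -> exists2 x, 0 <= x <= 1 & 0 < f x.
Proof.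
move=> [_ f_ge0 intF _ F1]; apply: contrapT => f_pos.
have f0 x : [set` `[0%R, 1%R]] x -> (f x)%:E = 0%E.
  rewrite /= in_itv /= => x01; congr EFin; apply/eqP; rewrite eq_le f_ge0 // andbT.
  by rewrite leNgt; apply/negP => fx; apply: f_pos; exists x.
have := intF 1; rewrite lexx ler01 integral0_eq // F1 // => /(_ isT) [].
by move/eqP; rewrite eq_sym oner_eq0.
Qed.

Lemma virtual_value_lt (R : realType) (F f : R -> R) (y y' : R) :
  nondecreasing_hazard F f -> 0 <= y -> y < y' -> y' < 1 ->
  0 < f y -> F y < 1 -> virtual_value F f y < virtual_value F f y'.
Proof.
move=> hz y0 yy' y'1 fy Fy.
have hy : 0 < hazard F f y by rewrite divr_gt0 // subr_gt0.
have hyy' := hz y y' y0 (ltW yy') y'1.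
have vvE z : virtual_value F f z = z - (hazard F f z)^-1.
  by rewrite /virtual_value /hazard invf_div.
rewrite !vvE; suff : (hazard F f y')^-1 <= (hazard F f y)^-1 by lra.
by rewrite lef_pV2 // posrE (lt_le_trans hy).
Qed.

Section myerson_price.
Variables (R : realType) (F2 f2 v2star : R -> R).
Hypotheses (F2_1 : forall x, 1 <= x -> F2 x = 1) (my : myerson_price F2 f2 v2star).

Lemma myerson_price_interior v : 0 <= v < 1 ->
  [/\ v < v2star v, v2star v < 1, 0 < f2 (v2star v) & F2 (v2star v) < 1].
Proof.
move=> v01; have [vs s1 fs] := my v01; rewrite /virtual_value => vvE.
have s_lt1 : v2star v < 1.
  rewrite lt_neqAle s1 andbT; apply/eqP => s_eq1.
  by move: vvE v01; rewrite s_eq1 F2_1 // subrr mul0r subr0 => <-; lra.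
split => //; suff : 0 < (1 - F2 (v2star v)) / f2 (v2star v).
  by rewrite pmulr_lgt0 ?invr_gt0 // subr_gt0.
lra.
Qed.

Lemma myerson_price_monotone a v :
  nondecreasing_hazard F2 f2 -> 0 <= a -> a <= v -> v < 1 -> v2star a <= v2star v.
Proof.
move=> hz a0 av v1; have a01 : 0 <= a < 1 by lra.
have v01 : 0 <= v < 1 by lra.
have [_ sa1 _ _] := myerson_price_interior a01.
have [vsv _ fsv Fsv] := myerson_price_interior v01.
have [_ _ _ vva] := my a01; have [_ _ _ vvv] := my v01.
rewrite leNgt; apply/negP => sv_lt_sa.
have sv0 : 0 <= v2star v by lra.
have := virtual_value_lt hz sv0 sv_lt_sa sa1 fsv Fsv; rewrite vva vvv; lra.
Qed.

Lemma mevboost_sub_auction :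
  @B1_proposes_mevboost R `&` ([set` `[0%R, 1%R[] `*` [set` `[0%R, 1%R]])
    `<=` B1_proposes_auction v2star.
Proof.
move=> z [z21 [/= /[!in_itv] /= z1 _]]; have [z1_lt _ _ _] := my z1.
by move: z21; rewrite /B1_proposes_mevboost /B1_proposes_auction /=; lra.
Qed.

End myerson_price.

Lemma lebesgue_measure_itvcc (R : realType) (a b : R) :
  a <= b -> lebesgue_measure ([set` `[a, b]] : set R) = (b - a)%:E.
Proof.
rewrite le_eqVlt => /predU1P[->|ab]; last by rewrite lebesgue_measure_itv /= lte_fin ab EFinB.
by rewrite lebesgue_measure_itv /= ltxx subrr.
Qed.

Section product_density.
Variables (R : realType) (f1 f2 : R -> R).
Hypotheses (f1_cont : {within `[0%R, 1%R], continuous f1})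
  (f2_cont : {within `[0%R, 1%R], continuous f2})
  (f1_ge0 : forall x, 0 <= x <= 1 -> 0 <= f1 x)
  (f2_ge0 : forall x, 0 <= x <= 1 -> 0 <= f2 x).

Let unit_square : set (R * R) := [set` `[0%R, 1%R]] `*` [set` `[0%R, 1%R]].
Let mu2 := ((@lebesgue_measure R) \x (@lebesgue_measure R))%E.
Let density (z : R * R) : \bar R := (f1 z.1 * f2 z.2)%:E.

Lemma measurable_unit_square : measurable unit_square.
Proof. by apply: measurableX; exact: measurable_itv. Qed.

Lemma measurable_density : measurable_fun unit_square density.
Proof.
have mI : measurable ([set` `[0%R, 1%R]] : set R) by exact: measurable_itv.
have /(measurable_restrictT _ mI) m1 := subspace_continuous_measurable_fun mI f1_cont.
have /(measurable_restrictT _ mI) m2 := subspace_continuous_measurable_fun mI f2_cont.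
apply: (eq_measurable_fun (fun z => ((f1 \_ `[0%R, 1%R]) z.1 * (f2 \_ `[0%R, 1%R]) z.2)%:E)).
  by move=> [x y]; rewrite inE => -[/= x01 y01]; rewrite /patch !mem_set.
apply: (measurable_funS measurableT) => //; apply/measurable_EFinP.
by apply: measurable_funM; [exact: measurableT_comp m1 _|exact: measurableT_comp m2 _].
Qed.

Lemma integral_cst_rect (k a b c d : R) : a <= b -> c <= d ->
  (\int[mu2]_(z in [set` `[a, b]] `*` [set` `[c, d]]) k%:E = (k * ((b - a) * (d - c)))%:E)%E.
Proof.
move=> ab cd; rewrite integral_cst; last by apply: measurableX; exact: measurable_itv.
have rectE := product_measure1E (@lebesgue_measure R) (@lebesgue_measure R)
  (measurable_itv `[a, b]) (measurable_itv `[c, d]).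
by rewrite !EFinM -(lebesgue_measure_itvcc ab) -(lebesgue_measure_itvcc cd) -rectE.
Qed.

Lemma density_ge0 z : unit_square z -> (0 <= density z)%E.
Proof.
by case=> /= /[!in_itv] /= z1 z2; rewrite lee_fin mulr_ge0 ?f1_ge0 ?f2_ge0.
Qed.

Lemma density_bounded : exists2 K, 0 <= K & forall z, unit_square z -> (density z <= K%:E)%E.
Proof.
have [k1 /[!in_itv] /= k1I f1_max] := EVT_max ler01 f1_cont.
have [k2 /[!in_itv] /= k2I f2_max] := EVT_max ler01 f2_cont.
exists (f1 k1 * f2 k2); first by rewrite mulr_ge0 ?f1_ge0 ?f2_ge0.
move=> z [/= /[!in_itv] /= z1 z2].
by rewrite lee_fin ler_pM ?f1_ge0 ?f2_ge0 ?f1_max ?f2_max ?in_itv.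
Qed.

Lemma integral_density_fin_num A :
  A `<=` unit_square -> (\int[mu2]_(z in A) density z)%E \is a fin_num.
Proof.
move=> A_sq; rewrite ge0_fin_numE; last first.
  by apply: integral_ge0 => z /A_sq; exact: density_ge0.
have [K K0 density_le] := density_bounded.
apply: (@le_lt_trans _ _ (\int[mu2]_(z in unit_square) K%:E)%E).
  apply: ge0_le_subset_integral => // z zA.
  by rewrite density_ge0 ?density_le //=; exact: A_sq.
by rewrite integral_cst_rect ?ler01 // ltry.
Qed.

Let edge : set (R * R) := [set` `[1%R, 1%R]] `*` [set` `[0%R, 1%R]].

Lemma edge_sub_unit_square : edge `<=` unit_square.
Proof.
move=> z [/= /[!in_itv] /= /andP[z1 z1'] z2].
by split; rewrite //= in_itv /= z1' (le_trans ler01 z1).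
Qed.

Lemma integral_density_edge0 : (\int[mu2]_(z in edge) density z = 0)%E.
Proof.
have edge_sq := edge_sub_unit_square.
have [K K0 density_le] := density_bounded.
apply/eqP; rewrite eq_le integral_ge0 ?andbT; last by move=> z /edge_sq /density_ge0.
apply: (@le_trans _ _ (\int[mu2]_(z in edge) K%:E)%E).
  apply: ge0_le_subset_integral => // z /edge_sq zsq.
  by rewrite density_ge0 ?density_le.
by rewrite integral_cst_rect ?ler01 // subrr mul0r mulr0.
Qed.

Lemma integral_density_rect_gt0 (a b c d : R) :
  0 <= a -> a < b -> b <= 1 -> 0 <= c -> c < d -> d <= 1 ->
  (forall x, a <= x <= b -> 0 < f1 x) -> (forall y, c <= y <= d -> 0 < f2 y) ->
  (0 < \int[mu2]_(z in [set` `[a, b]] `*` [set` `[c, d]]) density z)%E.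
Proof.
move=> a0 ab b1 c0 cd d1 f1_pos f2_pos.
have sub01 (u v : R) : 0 <= u -> v <= 1 -> [set` `[u, v]] `<=` [set` `[0%R, 1%R]].
  by move=> u0 v1 x /= /[!in_itv] /= /andP[ux xv]; apply/andP; split; lra.
have [m1 /[!in_itv] /= m1I f1_min] :=
  EVT_min (ltW ab) (continuous_subspaceW (sub01 _ _ a0 b1) f1_cont).
have [m2 /[!in_itv] /= m2I f2_min] :=
  EVT_min (ltW cd) (continuous_subspaceW (sub01 _ _ c0 d1) f2_cont).
have m0 : 0 < f1 m1 * f2 m2 by rewrite mulr_gt0 ?f1_pos ?f2_pos.
apply: (@lt_le_trans _ _ (\int[mu2]_(z in [set` `[a, b]] `*` [set` `[c, d]]) (f1 m1 * f2 m2)%:E)%E).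
  by rewrite integral_cst_rect ?ltW // lte_fin mulr_gt0 // mulr_gt0 // subr_gt0.
apply: ge0_le_subset_integral => // z [/= /[!in_itv] /= z1 z2].
  rewrite lee_fin (ltW m0) /= lee_fin.
  by rewrite ler_pM ?f1_min ?f2_min ?in_itv // ltW ?f1_pos ?f2_pos.
by rewrite lee_fin mulr_ge0 // ltW ?f1_pos ?f2_pos.
Qed.

Lemma open_edge_sub_unit_square (E : set (R * R)) :
  E `&` ([set` `[0%R, 1%R[] `*` [set` `[0%R, 1%R]]) `<=` unit_square.
Proof.
move=> z [_ [/= /[!in_itv] /= /andP[z1 z1'] z2]].
by split; rewrite //= in_itv /= z1 ltW.
Qed.

Lemma prob2_open_edge (E : set (R * R)) : measurable E ->
  prob2 f1 f2 E = (\int[mu2]_(z in E `&` ([set` `[0%R, 1%R[] `*` [set` `[0%R, 1%R]])) density z)%E.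
Proof.
set A := E `&` _ => mE.
have A_sq : A `<=` unit_square := @open_edge_sub_unit_square E.
have mA : measurable A.
  by apply: measurableI mE _; apply: measurableX; exact: measurable_itv.
have mN : measurable edge by apply: measurableX; exact: measurable_itv.
apply/eqP; rewrite eq_le; apply/andP; split; last first.
  apply: ge0_le_subset_integral => [z Az|z /A_sq zsq|z [_ /density_ge0 //]].
    by split; [case: Az|exact: A_sq].
  by apply/andP; split; [exact: density_ge0|].
rewrite -[leRHS]adde0 -integral_density_edge0 -ge0_integral_setU //.
- apply: ge0_le_subset_integral => [z [Ez [/= z1 z2]]|z [Ez zsq]|z [/A_sq|/edge_sub_unit_square]].
  + move: (z1) => /[!in_itv] /= /andP[z10 z11].
    have [z1_lt1|z1_ge1] := ltP z.1 1; [left|right].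
      by split => //; split => //=; rewrite in_itv /= z10.
    by split => //=; rewrite in_itv /= z1_ge1.
  + by apply/andP; split; [exact: density_ge0|].
  + exact: density_ge0.
  + exact: density_ge0.
- apply: (measurable_funS measurable_unit_square) measurable_density.
  by move=> z [/A_sq|/edge_sub_unit_square].
- by move=> z [/A_sq|/edge_sub_unit_square] /density_ge0.
- rewrite disj_set2E; apply/eqP/seteqP; split => // z [[_ [/= z1 _]] [/= z1' _]].
  by move: z1 z1'; rewrite !in_itv /= => /andP[_ z1] /andP[z1' _]; lra.
Qed.

Lemma integral_density_le_prob2 (E D : set (R * R)) :
  D `<=` E `&` unit_square -> (\int[mu2]_(z in D) density z <= prob2 f1 f2 E)%E.
Proof.
move=> DE; apply: ge0_le_subset_integral => // [z /DE [_ zsq]|z [_]].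
  by apply/andP; split; [exact: density_ge0|].
exact: density_ge0.
Qed.

Lemma integral_density_lt_setU (A C : set (R * R)) :
  measurable A -> measurable C -> A `<=` unit_square -> C `<=` unit_square ->
  [disjoint A & C] -> (0 < \int[mu2]_(z in C) density z)%E ->
  (\int[mu2]_(z in A) density z < \int[mu2]_(z in A `|` C) density z)%E.
Proof.
move=> mA mC A_sq C_sq AC C_gt0.
have AC_sq : A `|` C `<=` unit_square by move=> z [/A_sq|/C_sq].
rewrite ge0_integral_setU //; first by rewrite lteDl // integral_density_fin_num.
- exact: measurable_funS measurable_unit_square AC_sq measurable_density.
- by move=> z /AC_sq /density_ge0.
Qed.

End product_density.

Lemma measurable_mevboost (R : realType) : measurable (@B1_proposes_mevboost R).
Proof.
have -> : @B1_proposes_mevboost R = ~` (setT `&` [set z | z.1 <= z.2]).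
  apply/seteqP; split => z; rewrite /B1_proposes_mevboost /= ltNge.
    by move=> /negP z12 [_ /z12].
  by move=> z12; apply/negP => z21; exact: z12.
by apply: measurableC; apply: measurable_fun_le.
Qed.

Lemma auction_only_rectangle (R : realType) (F1 f1 F2 f2 v2star : R -> R) :
  is_cdf_with_density F1 f1 -> is_cdf_with_density F2 f2 ->
  nondecreasing_hazard F2 f2 -> myerson_price F2 f2 v2star ->
  exists a b c d : R, [/\ 0 <= a < b, b < c < d, d <= 1,
    (forall x, a <= x <= b -> 0 < f1 x) /\ (forall y, c <= y <= d -> 0 < f2 y) &
    [set` `[a, b]] `*` [set` `[c, d]] `<=`
      B1_proposes_auction v2star `\` @B1_proposes_mevboost R].
Proof.
move=> cdf1 [f2_cont _ _ _ F2_1] hz2 my.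
have [f1_cont _ _ _ _] := cdf1; have [x0 x01 f1x0] := cdf_density_gt0 cdf1.
have [a [b' [a_gt0 ab' b'_lt1 f1_pos]]] := continuous_gt0_subitv ltr01 f1_cont x01 f1x0.
have a01 : 0 <= a < 1 by apply/andP; split; lra.
have [as_ s_lt1 f2s _] := myerson_price_interior F2_1 my a01.
set s := v2star a in as_ s_lt1 f2s.
pose b := Num.min b' ((a + s) / 2).
have ab : a < b by rewrite lt_min ab' /=; lra.
have bb' : b <= b' by rewrite ge_min lexx.
have bs : b < s by rewrite gt_min; apply/orP; right; lra.
have f2_cont_bs : {within `[b, s], continuous f2}.
  apply: continuous_subspaceW f2_cont => y /= /[!in_itv] /= /andP[b_y y_s].
  by apply/andP; split; lra.
have s_bs : b <= s <= s by rewrite lexx (ltW bs).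
have [c [d [bc cd ds f2_pos]]] := continuous_gt0_subitv bs f2_cont_bs s_bs f2s.
exists a, b, c, d; split.
- by rewrite (ltW a_gt0) ab.
- by rewrite bc cd.
- lra.
- by split => // x /andP[ax xb]; apply: f1_pos; apply/andP; split; lra.
move=> [x y] [/= /[!in_itv] /= /andP[ax xb] /andP[cy yd]].
have x_lt1 : x < 1 by lra.
have := myerson_price_monotone F2_1 my hz2 (ltW a_gt0) ax x_lt1.
rewrite /B1_proposes_auction /B1_proposes_mevboost /= -/s => sx.
by split; [lra|apply/negP; rewrite -leNgt; lra].
Qed.

Theorem corollary1 (R : realType) (F1 f1 F2 f2 v2star : R -> R) :
  is_cdf_with_density F1 f1 ->
  is_cdf_with_density F2 f2 ->
  nondecreasing_hazard F1 f1 ->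
  nondecreasing_hazard F2 f2 ->
  hazard_rate_dominates F1 f1 F2 f2 ->
  myerson_price F2 f2 v2star ->
  (prob2 f1 f2 (@B1_proposes_mevboost R) < prob2 f1 f2 (B1_proposes_auction v2star))%E.
Proof.
move=> cdf1 cdf2 _ hz2 _ my.
have [f1_cont f1_ge0 _ _ _] := cdf1; have [f2_cont f2_ge0 _ _ _] := cdf2.
have [a [b [c [d [/andP[a0 ab] /andP[bc cd] d1 [f1_pos f2_pos] C_auction]]]]] :=
  auction_only_rectangle cdf1 cdf2 hz2 my.
have C_sq : [set` `[a, b]] `*` [set` `[c, d]] `<=` [set` `[0%R, 1%R]] `*` [set` `[0%R, 1%R]].
  move=> z [/= /[!in_itv] /= /andP[az zb] /andP[cz zd]].
  by split => /=; apply/andP; split; lra.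
rewrite prob2_open_edge //; last exact: measurable_mevboost.
set A := @B1_proposes_mevboost R `&` _.
set C := [set` `[a, b]] `*` [set` `[c, d]] in C_auction C_sq *.
have A_sq := @open_edge_sub_unit_square R (@B1_proposes_mevboost R).
have mA : measurable A.
  by apply: measurableI; [exact: measurable_mevboost|apply: measurableX; exact: measurable_itv].
have mC : measurable C by apply: measurableX; exact: measurable_itv.
have AC : [disjoint A & C].
  by rewrite disj_set2E; apply/eqP/seteqP; split => // z [[Mz _] /C_auction[_]].
apply: (lt_le_trans (integral_density_lt_setU f1_cont f2_cont f1_ge0 f2_ge0 mA mC A_sq C_sq AC _)).
  by apply: integral_density_rect_gt0 => //; lra.
apply: integral_density_le_prob2 => // z [Az|Cz]; split.
- exact: mevboost_sub_auction my _ Az.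
- exact: A_sq.
- by case: (C_auction _ Cz).
- exact: C_sq.
Qed.
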